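(* Let $\mathbf{T}\subset\mathbb{S}^3$ be a $\mathbb{Z}_2$-symmetric spherical tetrahedron with dihedral angles $A$, $B=E$, $C=F$, $D$ and edge lengths $l_A$, $l_B=l_E$, $l_C=l_F$, $l_D$. Put $\mathcal{A}_+=\cos\frac{A+D}{2}$, $\mathcal{A}_-=\cos\frac{D-A}{2}$, $\mathcal{B}=\cos B$, $\mathcal{C}=\cos C$, and $$\Delta=(\mathcal{A}_--\mathcal{A}_+-\mathcal{B}-\mathcal{C})(\mathcal{A}_--\mathcal{A}_++\mathcal{B}+\mathcal{C})(\mathcal{A}_-+\mathcal{A}_+-\mathcal{B}+\mathcal{C})(\mathcal{A}_-+\mathcal{A}_++\mathcal{B}-\mathcal{C}).$$ Then the dual parameter $v=\sqrt{c_{00}c_{22}/\det G}$ of $\mathbf{T}$ is a positive root of the quadratic equation $$v^2-\frac{4\,(\mathcal{A}_+\mathcal{A}_-+\mathcal{B}\mathcal{C})(\mathcal{A}_+\mathcal{B}+\mathcal{A}_-\mathcal{C})(\mathcal{A}_+\mathcal{C}+\mathcal{A}_-\mathcal{B})}{\Delta}=1.$$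
   Context: A spherical tetrahedron $\mathbf{T}\subset\mathbb{S}^3\subset\mathbb{R}^4$ is the intersection of $\mathbb{S}^3$ with the cone over four linearly independent unit vectors $\mathrm{p}_0,\dots,\mathrm{p}_3$. Edge lengths $l_{ij}\in[0,\pi]$: $\cos l_{ij}=\langle\mathrm{p}_i,\mathrm{p}_j\rangle$; dihedral angles $\alpha_{ij}\in[0,\pi]$: $\cos\alpha_{ij}=-\langle\mathrm{v}_i,\mathrm{v}_j\rangle$ with $\mathrm{v}_i$ the outer unit normal of the face opposite $\mathrm{p}_i$. Notation: $l_A=l_{01}$, $l_B=l_{02}$, $l_C=l_{03}$, $l_D=l_{23}$, $l_E=l_{13}$, $l_F=l_{12}$; $A,\dots,F$ are the dihedral angles along the edges of lengths $l_A,\dots,l_F$. The Gram matrix is $G=(\langle\mathrm{v}_i,\mathrm{v}_j\rangle)_{i,j=0}^3=\begin{pmatrix}1&-\cos D&-\cos E&-\cos F\\ -\cos D&1&-\cos C&-\cos B\\ -\cos E&-\cos C&1&-\cos A\\ -\cos F&-\cos B&-\cos A&1\end{pmatrix}$, and $c_{ij}$ denotes its $(i,j)$-cofactor $(-1)^{i+j}\det(\text{minor})$. $\mathbf{T}$ is $\mathbb{Z}_2$-symmetric if invariant under rotation through $\pi$ about the axis through the midpoints of the edges $\mathrm{p}_0\mathrm{p}_1$ and $\mathrm{p}_2\mathrm{p}_3$ (so $l_B=l_E$, $l_C=l_F$, $B=E$, $C=F$). *)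

From mathcomp Require Import all_boot all_order all_algebra.
From mathcomp Require Import reals trigo.
Set Implicit Arguments. Unset Strict Implicit. Unset Printing Implicit Defensive.
Import Order.TTheory GRing.Theory Num.Theory.
Local Open Scope ring_scope.

Section SphTet.
Variable R : realType.

Definition dot4 (u w : 'rV[R]_4) : R := \sum_(k < 4) u 0 k * w 0 k.

Definition vmx (p : 'I_4 -> 'rV[R]_4) : 'M[R]_4 :=
  \matrix_(i < 4, j < 4) p i 0 j.

Definition sph_tetrahedron (p : 'I_4 -> 'rV[R]_4) : Prop :=
  (forall i, dot4 (p i) (p i) = 1) /\ row_free (vmx p).

Definition outer_unit_normal (p : 'I_4 -> 'rV[R]_4) (i : 'I_4) (v : 'rV[R]_4) : Prop :=
  dot4 v v = 1 /\ (forall j, j != i -> dot4 v (p j) = 0) /\ dot4 v (p i) < 0.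

Definition dihedral (v : 'I_4 -> 'rV[R]_4) (i j : 'I_4) : R :=
  acos (- dot4 (v i) (v j)).

Definition gram (v : 'I_4 -> 'rV[R]_4) : 'M[R]_4 :=
  \matrix_(i < 4, j < 4) dot4 (v i) (v j).

(* Z_2-symmetry: invariance under the rotation through pi about the axis
   through the midpoints of p0p1 and p2p3, i.e. an orthogonal map of R^4
   swapping p0 <-> p1 and p2 <-> p3. *)
Definition Z2_symmetric (p : 'I_4 -> 'rV[R]_4) : Prop :=
  exists Q : 'M[R]_4, Q *m Q^T = 1%:M /\
    p 0 *m Q = p 1 /\ p 1 *m Q = p 0 /\
    p 2%:R *m Q = p 3%:R /\ p 3%:R *m Q = p 2%:R.

End SphTet.

From mathcomp Require Import all_boot all_order all_algebra.
From mathcomp Require Import reals trigo.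
From mathcomp Require Import ring lra.
Import Order.TTheory GRing.Theory Num.Theory.
Local Open Scope ring_scope.
Set Implicit Arguments. Unset Strict Implicit.

(* G^-1 is the Gram matrix of the vertices rescaled by 1 / <p_i, v_i>, so
   c_ii = det G / <p_i, v_i>^2 > 0.  The rotation of the Z_2-symmetry permutes
   the vertices, hence (outer normals being unique) it permutes the normals in
   the same way, and G only involves cos A, cos B, cos C, cos D.  Substituting
   cos A + cos D = 2 A_+ A_- and 1 + cos A cos D = A_+^2 + A_-^2, one finds
   Delta = det G and
   c_00 c_22 - det G = 4 (A_+ A_- + B C)(A_+ B + A_- C)(A_+ C + A_- B). *)

Section Z2Gram.
Variable R : comNzRingType.
Variables a b c d : R.

Definition z2_gram : 'M[R]_4 := \matrix_(i < 4, j < 4)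
  (nth [::] [:: [:: 1; -d; -b; -c];
                [:: -d; 1; -c; -b];
                [:: -b; -c; 1; -a];
                [:: -c; -b; -a; 1]] i)`_j.

Lemma det_z2_gram :
  \det z2_gram = ((1 - a) * (1 - d) - (b + c) ^+ 2) * ((1 + a) * (1 + d) - (b - c) ^+ 2).
Proof.
do 3! rewrite !(expand_det_row _ 0) /cofactor !big_ord_recl !big_ord0.
rewrite !det_mx11 !mxE /= /bump /=; ring.
Qed.

Lemma cofactor_z2_gram00 :
  cofactor z2_gram 0 0 = 1 - a ^+ 2 - b ^+ 2 - c ^+ 2 - 2 * a * b * c.
Proof.
rewrite /cofactor; do 2! rewrite !(expand_det_row _ 0) /cofactor !big_ord_recl !big_ord0.
rewrite !det_mx11 !mxE /= /bump /=; ring.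
Qed.

Lemma cofactor_z2_gram22 :
  cofactor z2_gram 2%:R 2%:R = 1 - d ^+ 2 - b ^+ 2 - c ^+ 2 - 2 * b * c * d.
Proof.
rewrite /cofactor; do 2! rewrite !(expand_det_row _ 0) /cofactor !big_ord_recl !big_ord0.
rewrite !det_mx11 !mxE /= /bump /=; ring.
Qed.

Lemma cofactor_z2_gram_identity :
  cofactor z2_gram 0 0 * cofactor z2_gram 2%:R 2%:R - \det z2_gram
  = (a + d + 2 * b * c) * ((a + d) * (b ^+ 2 + c ^+ 2) + 2 * b * c * (1 + a * d)).
Proof. by rewrite cofactor_z2_gram00 cofactor_z2_gram22 det_z2_gram; ring. Qed.

End Z2Gram.

Section HalfAngles.
Variable R : realType.
Variables x y : R.

Let cos_sum_diff :
  cos x = cos ((x + y) / 2) * cos ((y - x) / 2) + sin ((x + y) / 2) * sin ((y - x) / 2)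
  /\ cos y = cos ((x + y) / 2) * cos ((y - x) / 2) - sin ((x + y) / 2) * sin ((y - x) / 2).
Proof. by rewrite -cosB -cosD; split; congr cos; field. Qed.

Lemma cos_half_sum_cos_half_diff :
  cos ((x + y) / 2) * cos ((y - x) / 2) = (cos x + cos y) / 2.
Proof. by case: cos_sum_diff => -> ->; field. Qed.

Lemma cos_half_sum_sqrD_cos_half_diff :
  cos ((x + y) / 2) ^+ 2 + cos ((y - x) / 2) ^+ 2 = 1 + cos x * cos y.
Proof.
case: cos_sum_diff => -> ->.
have := cos2Dsin2 ((x + y) / 2); have := cos2Dsin2 ((y - x) / 2).
set P := cos ((x + y) / 2); set M := cos ((y - x) / 2).
set S := sin ((x + y) / 2); set T := sin ((y - x) / 2) => hM hP.
have S2 : S ^+ 2 = 1 - P ^+ 2 by rewrite -hP; ring.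
have T2 : T ^+ 2 = 1 - M ^+ 2 by rewrite -hM; ring.
have -> : (P * M + S * T) * (P * M - S * T) = P ^+ 2 * M ^+ 2 - S ^+ 2 * T ^+ 2 by ring.
by rewrite S2 T2; ring.
Qed.
End HalfAngles.

Lemma z2_gram_half_angles (R : numFieldType) (X Y a b c d : R) :
  X * Y = (a + d) / 2 -> X ^+ 2 + Y ^+ 2 = 1 + a * d ->
  (Y - X - b - c) * (Y - X + b + c) * (Y + X - b + c) * (Y + X + b - c)
    = \det (z2_gram a b c d)
  /\ 4 * (X * Y + b * c) * (X * b + Y * c) * (X * c + Y * b)
    = cofactor (z2_gram a b c d) 0 0 * cofactor (z2_gram a b c d) 2%:R 2%:R
      - \det (z2_gram a b c d).
Proof.
move=> XY XXYY; split.
- rewrite det_z2_gram; transitivity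
    ((X ^+ 2 + Y ^+ 2 - 2 * (X * Y) - (b + c) ^+ 2)
     * (X ^+ 2 + Y ^+ 2 + 2 * (X * Y) - (b - c) ^+ 2)); first by ring.
  by rewrite XY XXYY; field.
- rewrite cofactor_z2_gram_identity; transitivity
    (4 * (X * Y + b * c) * (X * Y * (b ^+ 2 + c ^+ 2) + b * c * (X ^+ 2 + Y ^+ 2)));
    first by ring.
  by rewrite XY XXYY; field.
Qed.

Lemma ord4P (k : 'I_4) : [\/ k = 0, k = 1, k = 2%:R | k = 3%:R].
Proof.
by case: k => [[|[|[|[|k]]]] hk];
  [apply: Or41 | apply: Or42 | apply: Or43 | apply: Or44 | ]; try apply/val_inj.
Qed.

Section Dot.
Variable R : realType.
Implicit Types (u w : 'rV[R]_4) (Q : 'M[R]_4).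

Lemma dot4C u w : dot4 u w = dot4 w u.
Proof. by apply: eq_bigr => k _; rewrite mulrC. Qed.

Lemma dot4E u w : dot4 u w = (u *m w^T) 0 0.
Proof. by rewrite mxE; apply: eq_bigr => k _; rewrite mxE. Qed.

Lemma dot4ZZ u w (a b : R) : dot4 (a *: u) (b *: w) = a * b * dot4 u w.
Proof. by rewrite /dot4 mulr_sumr; apply: eq_bigr => k _; rewrite !mxE; ring. Qed.

Lemma dot4_orthogonal u w Q : Q *m Q^T = 1%:M -> dot4 (u *m Q) (w *m Q) = dot4 u w.
Proof. by move=> HQ; rewrite !dot4E trmx_mul mulmxA -(mulmxA u) HQ mulmx1. Qed.

Lemma dot4_unit_bound u w : dot4 u u = 1 -> dot4 w w = 1 -> -1 <= dot4 u w <= 1.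
Proof.
move=> Hu Hw.
have Hsum : dot4 (u + w) (u + w) = dot4 u u + 2 * dot4 u w + dot4 w w.
  rewrite /dot4 mulr_sumr -!big_split /=.
  by apply: eq_bigr => k _; rewrite !mxE; ring.
have Hdiff : dot4 (u - w) (u - w) = dot4 u u - 2 * dot4 u w + dot4 w w.
  rewrite /dot4 mulr_sumr -sumrN -!big_split /=.
  by apply: eq_bigr => k _; rewrite !mxE; ring.
have dot4_ge0 (z : 'rV[R]_4) : 0 <= dot4 z z by apply: sumr_ge0 => k _; exact: sqr_ge0.
have := dot4_ge0 (u + w); have := dot4_ge0 (u - w).
by rewrite Hsum Hdiff Hu Hw => ? ?; apply/andP; split; lra.
Qed.

End Dot.

Section Normals.
Variable R : realType.
Variables p v : 'I_4 -> 'rV[R]_4.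
Hypothesis v_normal : forall i, outer_unit_normal p i (v i).

Lemma gram_mul : gram v = vmx v *m (vmx v)^T.
Proof. by apply/matrixP => i j; rewrite !mxE; apply: eq_bigr => k _; rewrite !mxE. Qed.

Lemma cos_dihedral i j : cos (dihedral v i j) = - dot4 (v i) (v j).
Proof.
rewrite /dihedral acosK // in_itv /=.
have /andP[] := dot4_unit_bound (v_normal i).1 (v_normal j).1.
by move=> ? ?; apply/andP; split; lra.
Qed.

Lemma dot4_vertex_normal_neq0 i : dot4 (p i) (v i) != 0.
Proof. by have [_ [_ neg]] := v_normal i; rewrite dot4C lt_eqF. Qed.

Let Dn := diag_mx (\row_i dot4 (p i) (v i)).
Let Dn' := diag_mx (\row_i (dot4 (p i) (v i))^-1).

Lemma vmx_mul_normals : vmx p *m (vmx v)^T = Dn.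
Proof.
apply/matrixP => i j; rewrite !mxE.
transitivity (dot4 (p i) (v j)); first by apply: eq_bigr => k _; rewrite !mxE.
have [->|neq_ij] := eqVneq i j; first by rewrite mulr1n.
by rewrite mulr0n dot4C (v_normal j).2.1 // eq_sym.
Qed.

Let Dn_mulV : Dn *m Dn' = 1%:M.
Proof.
rewrite mulmx_diag; apply/matrixP => i j; rewrite !mxE.
by rewrite mulfV ?dot4_vertex_normal_neq0.
Qed.

Lemma det_gram_gt0 : 0 < \det (gram v).
Proof.
have : \det (vmx p) * \det (vmx v) != 0.
  rewrite -(det_tr (vmx v)) -det_mulmx vmx_mul_normals det_diag prodf_seq_neq0.
  by apply/allP => i _ /=; rewrite mxE dot4_vertex_normal_neq0.
rewrite mulf_eq0 negb_or => /andP[_ detV].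
by rewrite gram_mul det_mulmx det_tr -expr2 lt_def sqr_ge0 sqrf_eq0 detV.
Qed.

(* Dn^-1 V^T is a right, hence left, inverse of P. *)
Lemma gram_mul_inverse : gram v *m (Dn' *m (vmx p *m (vmx p)^T) *m Dn') = 1%:M.
Proof.
have PW : vmx p *m ((vmx v)^T *m Dn') = 1%:M by rewrite mulmxA vmx_mul_normals.
rewrite gram_mul.
have -> : vmx v *m (vmx v)^T *m (Dn' *m (vmx p *m (vmx p)^T) *m Dn')
    = vmx v *m ((vmx v)^T *m Dn' *m vmx p) *m (vmx p)^T *m Dn' by rewrite !mulmxA.
rewrite (mulmx1C PW) mulmx1.
by rewrite -[vmx v]trmxK -trmx_mul vmx_mul_normals tr_diag_mx.
Qed.

Lemma cofactor_gram i : dot4 (p i) (p i) = 1 ->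
  cofactor (gram v) i i = \det (gram v) / dot4 (p i) (v i) ^+ 2.
Proof.
move=> p_unit.
have : \adj (gram v) = \det (gram v) *: (Dn' *m (vmx p *m (vmx p)^T) *m Dn').
  by rewrite -[\adj _]mulmx1 -gram_mul_inverse mulmxA mul_adj_mx mul_scalar_mx.
rewrite mul_mx_diag mul_diag_mx => /matrixP /(_ i i); rewrite !mxE => ->.
have -> : \sum_j vmx p i j * (vmx p)^T j i = dot4 (p i) (p i).
  by apply: eq_bigr => k _; rewrite !mxE.
by rewrite p_unit mulr1 -invrM ?unitfE ?dot4_vertex_normal_neq0 // -expr2.
Qed.

Lemma cofactor_gram_gt0 i : dot4 (p i) (p i) = 1 -> 0 < cofactor (gram v) i i.
Proof.
move=> p_unit; rewrite cofactor_gram // divr_gt0 ?det_gram_gt0 //.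
by rewrite exprn_even_gt0 // dot4_vertex_normal_neq0 orbT.
Qed.

End Normals.

Section Symmetry.
Variable R : realType.
Variable p : 'I_4 -> 'rV[R]_4.

Lemma outer_unit_normal_uniq i u u' : row_free (vmx p) ->
  outer_unit_normal p i u -> outer_unit_normal p i u' -> u = u'.
Proof.
move=> p_free [u_unit [u_orth u_neg]] [u'_unit [u'_orth u'_neg]].
set d := dot4 u (p i) in u_neg *; set d' := dot4 u' (p i) in u'_neg *.
have w_orth : (d' *: u - d *: u') *m (vmx p)^T = 0.
  apply/matrixP => a j; rewrite (ord1 a) [RHS]mxE.
  transitivity (d' * dot4 u (p j) - d * dot4 u' (p j)).
    rewrite mxE /dot4 !mulr_sumr -sumrB; apply: eq_bigr => k _.
    by rewrite !mxE; ring.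
  have [->|neq_ji] := eqVneq j i; first by rewrite -/d -/d'; ring.
  by rewrite u_orth // u'_orth //; ring.
have pT_unit : (vmx p)^T \in unitmx by rewrite unitmx_tr -row_free_unit.
have eq_du : d' *: u = d *: u'.
  by apply/eqP; rewrite -subr_eq0 -(mulmxK pT_unit (_ - _)) w_orth mul0mx.
have eq_dd : d' = d.
  have := congr1 (fun x => dot4 x x) eq_du; rewrite /= !dot4ZZ u_unit u'_unit !mulr1.
  by move=> sq; nra.
by move: eq_du; rewrite eq_dd; apply: scalerI; rewrite lt_eqF.
Qed.

Variable Q : 'M[R]_4.
Hypothesis Q_orthogonal : Q *m Q^T = 1%:M.
Variable s : 'I_4 -> 'I_4.
Hypothesis s_involutive : involutive s.
Hypothesis Q_permutes : forall k, p k *m Q = p (s k).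

Lemma outer_unit_normal_mulmx i u :
  outer_unit_normal p i u -> outer_unit_normal p (s i) (u *m Q).
Proof.
move=> [u_unit [u_orth u_neg]]; split; first by rewrite dot4_orthogonal.
split; last by rewrite -Q_permutes dot4_orthogonal.
move=> j neq_ji; rewrite -(s_involutive j) -Q_permutes dot4_orthogonal // u_orth //.
by apply: contra neq_ji => /eqP <-; rewrite s_involutive.
Qed.

Lemma dot4_normals_invariant v i j : row_free (vmx p) ->
  (forall k, outer_unit_normal p k (v k)) ->
  dot4 (v (s i)) (v (s j)) = dot4 (v i) (v j).
Proof.
move=> p_free v_normal.
have vs k : v (s k) = v k *m Q.
  by apply: (outer_unit_normal_uniq p_free (v_normal _)); apply: outer_unit_normal_mulmx.
by rewrite !vs dot4_orthogonal.
Qed.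

End Symmetry.

Definition z2_swap (k : 'I_4) : 'I_4 := inord (if odd k then k.-1 else k.+1).

Lemma z2_swapE :
  [/\ z2_swap 0 = 1, z2_swap 1 = 0, z2_swap 2%:R = 3%:R & z2_swap 3%:R = 2%:R].
Proof. by split; apply/val_inj; rewrite /= inordK. Qed.

Lemma z2_swap_involutive : involutive z2_swap.
Proof.
have [s0 s1 s2 s3] := z2_swapE.
by move=> k; case: (ord4P k) => ->; rewrite ?s0 ?s1 ?s2 ?s3.
Qed.

Lemma Z2_symmetric_swap (R : realType) (p : 'I_4 -> 'rV[R]_4) :
  Z2_symmetric p -> exists2 Q : 'M[R]_4, Q *m Q^T = 1%:M &
    forall k, p k *m Q = p (z2_swap k).
Proof.
move=> [Q [Q_orth [Q0 [Q1 [Q2 Q3]]]]]; exists Q => // k.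
by have [s0 s1 s2 s3] := z2_swapE; case: (ord4P k) => ->; rewrite ?s0 ?s1 ?s2 ?s3.
Qed.

Lemma gram_Z2 (R : realType) (p v : 'I_4 -> 'rV[R]_4) :
  row_free (vmx p) -> (forall i, outer_unit_normal p i (v i)) -> Z2_symmetric p ->
  gram v = z2_gram (cos (dihedral v 2%:R 3%:R)) (cos (dihedral v 1 3%:R))
                   (cos (dihedral v 1 2%:R)) (cos (dihedral v 0 1)).
Proof.
move=> p_free v_normal /Z2_symmetric_swap [Q Q_orth Q_swap].
have [s0 s1 s2 s3] := z2_swapE.
have sym i j := dot4_normals_invariant Q_orth z2_swap_involutive Q_swap i j p_free v_normal.
have g02 := sym 0 2%:R; have g03 := sym 0 3%:R; rewrite s0 ?s2 ?s3 in g02 g03.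
apply/matrixP => i j; rewrite !mxE !(cos_dihedral v_normal) /=.
by case: (ord4P i) => ->; case: (ord4P j) => -> /=; rewrite ?opprK;
  first [exact: (v_normal _).1 | done | by rewrite dot4C
        | by rewrite dot4C g02 | by rewrite dot4C g03 | by rewrite -g02 | by rewrite -g03].
Qed.

Theorem lemma3 (R : realType) (p v : 'I_4 -> 'rV[R]_4) :
  sph_tetrahedron p ->
  (forall i, outer_unit_normal p i (v i)) ->
  Z2_symmetric p ->
  let A := dihedral v 2%:R 3%:R in
  let B := dihedral v 1 3%:R in
  let C := dihedral v 1 2%:R in
  let D := dihedral v 0 1 in
  let G := gram v in
  let cA_plus := cos ((A + D) / 2) in
  let cA_minus := cos ((D - A) / 2) in
  let cB := cos B in
  let cC := cos C in
  let Delta := (cA_minus - cA_plus - cB - cC) * (cA_minus - cA_plus + cB + cC)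
             * (cA_minus + cA_plus - cB + cC) * (cA_minus + cA_plus + cB - cC) in
  let dv := Num.sqrt (cofactor G 0 0 * cofactor G 2%:R 2%:R / \det G) in
  0 < dv /\
  dv ^+ 2 - 4 * (cA_plus * cA_minus + cB * cC) * (cA_plus * cB + cA_minus * cC)
              * (cA_plus * cC + cA_minus * cB) / Delta = 1.
Proof.
move=> [p_unit p_free] v_normal Z2 A B C D G cA_plus cA_minus cB cC Delta dv.
have detG_gt0 : 0 < \det G := det_gram_gt0 v_normal.
have ratio_gt0 : 0 < cofactor G 0 0 * cofactor G 2%:R 2%:R / \det G.
  by rewrite divr_gt0 // mulr_gt0 // (cofactor_gram_gt0 v_normal).
split; first by rewrite sqrtr_gt0.
rewrite /Delta /cA_plus /cA_minus.
have [-> ->] := z2_gram_half_angles cB cC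
  (cos_half_sum_cos_half_diff A D) (cos_half_sum_sqrD_cos_half_diff A D).
rewrite -(gram_Z2 p_free v_normal Z2) sqr_sqrtr ?ltW //.
by field; rewrite gt_eqF.
Qed.
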